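(* Let $\mathcal{R}$ be a field and $(\mathcal{C}^{\bullet},\partial)$ a bigraded cochain complex of $\mathcal{R}$-vector spaces as in the context. Then there are vector space isomorphisms \[ B^{3}(\mathcal{C},\partial)\cong(B^{3}(\mathcal{C},\partial)\cap\mathcal{C}^{3,0})\oplus(\mathcal{B}^{3}_{1}\cap\mathcal{C}^{2,1})\oplus(\mathcal{B}^{3}_{2}\cap\mathcal{C}^{1,2})\oplus B^{3}(\mathcal{C}^{0,\bullet},\partial_{0,1}), \] \[ Z^{3}(\mathcal{C},\partial)\cong Z^{3}(\mathcal{N}_{0},\overline{\partial})\oplus\ker(\varrho_{3})\oplus(\mathcal{Z}^{3}_{2}\cap\mathcal{C}^{1,2})\oplus\mathcal{Z}^{3}_{3}, \] \[ H^{3}(\mathcal{C},\partial)\cong\frac{Z^{3}(\mathcal{N}_{0},\overline{\partial})}{B^{3}(\mathcal{C},\partial)\cap\mathcal{C}^{3,0}}\oplus\frac{\ker(\varrho_{3})}{\mathcal{B}^{3}_{1}\cap\mathcal{C}^{2,1}}\oplus\frac{\mathcal{Z}^{3}_{2}\cap\mathcal{C}^{1,2}}{\mathcal{B}^{3}_{2}\cap\mathcal{C}^{1,2}}\oplus\frac{\mathcal{Z}^{3}_{3}}{B^{3}(\mathcal{C}^{0,\bullet},\partial_{0,1})}. \]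
   Context: Setting: $\mathcal{C}^{k}=\bigoplus_{p+q=k}\mathcal{C}^{p,q}$ with $\mathcal{C}^{p,q}=\{0\}$ if $p<0$ or $q<0$; $\partial$ is linear of degree $1$, $\partial^{2}=0$, $\partial=\partial_{2,-1}+\partial_{1,0}+\partial_{0,1}$ with $\partial_{i,j}(\mathcal{C}^{p,q})\subseteq\mathcal{C}^{p+i,q+j}$. For $\eta\in\mathcal{C}^k$, $\eta_{p,q}$ is its $\mathcal{C}^{p,q}$-component. $G^{q}\mathcal{C}:=\bigoplus_{j\geq q}\mathcal{C}^{i,j}$, $\pi_{q}:\mathcal{C}\to G^{q}\mathcal{C}$ the projection along the bigrading. $(\mathcal{C}^{0,\bullet},\partial_{0,1})$ is a cochain complex. $\mathcal{N}^{p,q}:=\ker(\partial_{0,1}|_{\mathcal{C}^{p,q}})\cap\ker(\partial_{2,-1}|_{\mathcal{C}^{p,q}})$, $\mathcal{N}_{q}:=\bigoplus_{p}\mathcal{N}^{p-q,q}$ (degree-$m$ part $\mathcal{N}^{m-q,q}$), a subcomplex with differential $\overline{\partial}:=\partial|_{\mathcal{N}_q}$. $\mathcal{M}^{k}:=\{\eta\in\mathcal{C}^{k}\mid(\partial\eta)_{i,j}\in B^{k+1}(\mathcal{N}_{j},\overline{\partial})\ \forall\, i+j=k+1\}$; $\mathcal{Z}^{k}_{q}:=\{\pi_{q}(\eta)\mid\eta\in\mathcal{M}^{k},\ \pi_{q}(\partial\eta)=0\}$; $\mathcal{B}^{k}_{q}:=\pi_{q}(B^{k}(\mathcal{C},\partial))$.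 $\mathcal{A}^{k}:=\{\pi_{1}(\eta)\mid\eta\in\mathcal{C}^{k},\ \pi_{1}(\partial\eta)=0\}$, $\mathcal{J}^{k}:=\mathcal{A}^{k}\cap\mathcal{C}^{k-1,1}$. For $\xi\in\mathcal{A}^{k}$ and any $\eta$ with $\pi_{1}\eta=\xi$, $\pi_{1}(\partial\eta)=0$, the class $[\partial_{2,-1}\xi_{k-1,1}+\partial_{1,0}\eta_{k,0}]\in H^{k+1}(\mathcal{N}_{0},\overline\partial)$ depends only on $\xi$, defining the linear map $\rho_{k}:\mathcal{A}^{k}\to H^{k+1}(\mathcal{N}_{0},\overline{\partial})$; $\varrho_{k}:=\rho_{k}|_{\mathcal{J}^{k}}$. *)

From HB Require Import structures.
From mathcomp Require Import all_boot all_order all_algebra.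
Unset Printing Implicit Defensive.
Import GRing.Theory.
Local Open Scope ring_scope.

(* A bigraded cochain complex: spaces C^{p,q} (p,q >= 0; negative bidegrees
   are zero, hence omitted) and the three linear components of the
   differential.  d21 : C^{p,q+1} -> C^{p+2,q}, d10 : C^{p,q} -> C^{p+1,q},
   d01 : C^{p,q} -> C^{p,q+1}. *)
Record bicx (R : fieldType) := BiCx {
  Cs : nat -> nat -> lmodType R;
  d21 : forall p q, {linear Cs p q.+1 -> Cs p.+2 q};
  d10 : forall p q, {linear Cs p q -> Cs p.+1 q};
  d01 : forall p q, {linear Cs p q -> Cs p q.+1}
}.
Arguments Cs {R}.
Arguments d21 {R}.
Arguments d10 {R}.
Arguments d01 {R}.

Section Defs.
Context {R : fieldType} (K : bicx R).
Local Notation C := (Cs K).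

(* elements of the total space: families of components eta_{p,q} *)
Definition cochain := forall p q : nat, C p q.

Definition czero : cochain := fun p q => 0.
Definition cadd (x y : cochain) : cochain := fun p q => x p q + y p q.
Definition copp (x : cochain) : cochain := fun p q => - x p q.
Definition cscale (a : R) (x : cochain) : cochain := fun p q => a *: x p q.

Definition subsp := cochain -> Prop.
Definition capS (A B : subsp) : subsp := fun x => A x /\ B x.

Definition deg (k : nat) : subsp := fun x => forall p q, p + q <> k -> x p q = 0.
Definition bideg (i j : nat) : subsp :=
  fun x => forall p q, (p, q) <> (i, j) -> x p q = 0.
Definition comp (i j : nat) (x : cochain) : cochain :=
  fun p q => if (p == i) && (q == j) then x p q else 0.
Definition proj (q0 : nat) (x : cochain) : cochain :=
  fun p q => if (q0 <= q)%N then x p q else 0.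

Definition D21 (x : cochain) : cochain := fun p q =>
  match p as p0 return C p0 q with
  | 0 => 0 | 1 => 0 | p'.+2 => d21 K p' q (x p' q.+1) end.
Definition D10 (x : cochain) : cochain := fun p q =>
  match p as p0 return C p0 q with
  | 0 => 0 | p'.+1 => d10 K p' q (x p' q) end.
Definition D01 (x : cochain) : cochain := fun p q =>
  match q as q0 return C p q0 with
  | 0 => 0 | q'.+1 => d01 K p q' (x p q') end.
Definition dtot (x : cochain) : cochain := cadd (D21 x) (cadd (D10 x) (D01 x)).

Definition Zc (k : nat) : subsp := fun x => deg k x /\ dtot x = czero.
Definition Bc (k : nat) : subsp := fun x =>
  match k with 0 => x = czero | k'.+1 => exists y, deg k' y /\ dtot y = x end.

Definition B0 (k : nat) : subsp := fun x =>
  match k with 0 => x = czero | k'.+1 => exists y, bideg 0 k' y /\ D01 y = x end.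

Definition Nsp (p q : nat) : subsp := fun x =>
  bideg p q x /\ D01 x = czero /\ D21 x = czero.
(* Z^m(N_q, dbar), with (N_q)^m = N^{m-q,q} (zero if m < q) *)
Definition ZN (q m : nat) : subsp := fun x =>
  if (q <= m)%N then Nsp (m - q) q x /\ dtot x = czero else x = czero.
Definition BN (q m : nat) : subsp := fun x =>
  match m with
  | 0 => x = czero
  | m'.+1 => if (q <= m')%N then exists y, Nsp (m' - q) q y /\ dtot y = x
             else x = czero
  end.

Definition Msp (k : nat) : subsp := fun x =>
  deg k x /\ forall i j, i + j = k.+1 -> BN j k.+1 (comp i j (dtot x)).
Definition Zq (k q : nat) : subsp := fun xi =>
  exists x, Msp k x /\ proj q x = xi /\ proj q (dtot x) = czero.
Definition Bq (k q : nat) : subsp := fun xi =>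
  exists b, Bc k b /\ proj q b = xi.
Definition Asp (k : nat) : subsp := fun xi =>
  exists x, deg k x /\ proj 1 x = xi /\ proj 1 (dtot x) = czero.
Definition Jsp (k : nat) : subsp := capS (Asp k) (bideg k.-1 1).

(* ker(varrho_k), k >= 1: xi in J^k with rho_k(xi) = 0 in H^{k+1}(N_0),
   i.e. the representative d_{2,-1} xi_{k-1,1} + d_{1,0} eta_{k,0}
   (for an eta as in the definition of rho_k; the class does not depend on
   the choice) lies in B^{k+1}(N_0, dbar). *)
Definition ker_varrho (k : nat) : subsp := fun xi =>
  Jsp k xi /\
  exists x, deg k x /\ proj 1 x = xi /\ proj 1 (dtot x) = czero /\
    BN 0 k.+1 (cadd (D21 (comp k.-1 1 xi)) (D10 (comp k 0 x))).

Definition lin_on (S : subsp) (f : cochain -> cochain) :=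
  forall a x y, S x -> S y -> f (cadd (cscale a x) y) = cadd (cscale a (f x)) (f y).

(* S is isomorphic (as vector space) to the external direct sum
   A1 (+) A2 (+) A3 (+) A4, via x |-> (f1 x, f2 x, f3 x, f4 x). *)
Definition iso4 (S A1 A2 A3 A4 : subsp) :=
  exists f1 f2 f3 f4 : cochain -> cochain,
    [/\ lin_on S f1, lin_on S f2, lin_on S f3 & lin_on S f4] /\
    (forall x, S x -> [/\ A1 (f1 x), A2 (f2 x), A3 (f3 x) & A4 (f4 x)]) /\
    (forall x y, S x -> S y -> f1 x = f1 y -> f2 x = f2 y -> f3 x = f3 y ->
       f4 x = f4 y -> x = y) /\
    (forall a1 a2 a3 a4, A1 a1 -> A2 a2 -> A3 a3 -> A4 a4 ->
       exists x, [/\ S x, f1 x = a1, f2 x = a2, f3 x = a3 & f4 x = a4]).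

(* S/S' is isomorphic to (A1/B1) (+) (A2/B2) (+) (A3/B3) (+) (A4/B4):
   a linear map f = (f1,..,f4) from S to A1 (+) .. (+) A4, sending S' into
   B1 (+) .. (+) B4, whose induced map S/S' -> \oplus_i Ai/Bi is bijective. *)
Definition qiso4 (S S' A1 B1 A2 B2 A3 B3 A4 B4 : subsp) :=
  exists f1 f2 f3 f4 : cochain -> cochain,
    [/\ lin_on S f1, lin_on S f2, lin_on S f3 & lin_on S f4] /\
    (forall x, S x -> [/\ A1 (f1 x), A2 (f2 x), A3 (f3 x) & A4 (f4 x)]) /\
    (forall x, S x -> S' x -> [/\ B1 (f1 x), B2 (f2 x), B3 (f3 x) & B4 (f4 x)]) /\
    (forall x, S x -> B1 (f1 x) -> B2 (f2 x) -> B3 (f3 x) -> B4 (f4 x) -> S' x) /\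
    (forall a1 a2 a3 a4, A1 a1 -> A2 a2 -> A3 a3 -> A4 a4 ->
       exists x, [/\ S x, B1 (cadd (f1 x) (copp a1)), B2 (cadd (f2 x) (copp a2)),
                      B3 (cadd (f3 x) (copp a3)) & B4 (cadd (f4 x) (copp a4))]).

End Defs.

(* Filter the cocycles by F_q := Z^3 \cap ker pi_q, the cocycles without
   components in C^{i,j} for j >= q, so that Z^3 = F_4 and F_1 = Z^3(N_0).
   For q = 3, 2, 1 the projection pi_q maps F_{q+1} onto \mathcal Z^3_3,
   \mathcal Z^3_2 \cap C^{1,2} and ker(varrho_3) respectively, with kernel F_q:
   an element of M^3 (resp. a witness for ker(varrho_3)) is turned into a
   cocycle with the same pi_q-part by subtracting elements of the N^{p,j},
   which is what the boundary conditions defining M^3 and varrho_3 provide.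
   The same maps send boundaries onto B^3(C^{0,.}), \mathcal B^3_2 \cap C^{1,2},
   \mathcal B^3_1 \cap C^{2,1} and B^3 \cap C^{3,0}.  Over a field each step
   splits, and choosing every retraction onto F_q so that it maps boundaries
   to boundaries (Zorn's lemma) yields a single isomorphism of Z^3 with the
   direct sum that restricts to B^3, hence also decomposes H^3. *)

From HB Require Import structures.
From Pilot Require Import Defs.
From mathcomp Require Import all_boot all_order all_algebra.
From mathcomp Require Import boolp classical_sets zify.
Set Implicit Arguments. Unset Strict Implicit. Unset Printing Implicit Defensive.
Import GRing.Theory.
Local Open Scope ring_scope.
Local Open Scope classical_set_scope.

Section Subspaces.
Variables (R : fieldType) (U : lmodType R).
Implicit Types (S Q T A : set U) (x y : U).

Definition subspace S := S 0 /\ forall a x y, S x -> S y -> S (a *: x + y).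

Lemma subspaceD S x y : subspace S -> S x -> S y -> S (x + y).
Proof. by move=> [_ hS] Sx Sy; rewrite -[x]scale1r; apply: hS. Qed.

Lemma subspaceZ S a x : subspace S -> S x -> S (a *: x).
Proof. by move=> [S0 hS] Sx; rewrite -[_ *: _]addr0; apply: hS. Qed.

Lemma subspaceB S x y : subspace S -> S x -> S y -> S (x - y).
Proof. by move=> hS Sx Sy; rewrite -scaleN1r; apply: subspaceD => //; apply: subspaceZ. Qed.

Lemma subspaceI S T : subspace S -> subspace T -> subspace (S `&` T).
Proof.
by move=> [S0 hS] [T0 hT]; split=> // a x y [Sx Tx] [Sy Ty]; split; [apply: hS | apply: hT].
Qed.

Lemma direct_sum_uniq A Q u u' k k' : subspace A -> subspace Q ->
  (forall x, A x -> Q x -> x = 0) -> A u -> A u' -> Q k -> Q k' ->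
  u + k = u' + k' -> k = k'.
Proof.
move=> hA hQ AQ0 Au Au' Qk Qk' e.
have e' : k' - k = u - u'.
  by apply/eqP; rewrite subr_eq addrAC e addrC addKr.
apply/eqP; rewrite eq_sym -subr_eq0; apply/eqP/AQ0; last exact: subspaceB.
by rewrite e'; apply: subspaceB.
Qed.

Lemma subspace_extend S Q A x : subspace S -> subspace Q -> subspace A -> A `<=` S ->
  (forall z, A z -> Q z -> z = 0) -> S x -> ~ (exists u k, [/\ A u, Q k & x = u + k]) ->
  let B := [set u + c *: x | u in A & c in [set: R]] in
  [/\ subspace B, A `<` B, B `<=` S & forall z, B z -> Q z -> z = 0].
Proof.
move=> hS hQ hA AS AQ0 Sx xAQ B.
have Ax : ~ A x.
  by move=> Ax; apply: xAQ; exists x, 0; split=> //; [exact: hQ.1 | rewrite addr0].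
split.
- split; first by exists 0; [exact: hA.1 | exists 0 => //; rewrite scale0r addr0].
  move=> a _ _ [u Au [c _ <-]] [v Av [d _ <-]].
  exists (a *: u + v); first exact: hA.2.
  by exists (a * c + d) => //; rewrite scalerDr scalerA addrACA -scalerDl.
- rewrite /proper; split.
    by move=> u Au; exists u => //; exists 0 => //; rewrite scale0r addr0.
  move=> BA; apply: Ax; apply: BA; exists 0; first exact: hA.1.
  by exists 1 => //; rewrite scale1r add0r.
- by move=> _ [u Au [c _ <-]]; apply: subspaceD (AS _ Au) (subspaceZ _ hS Sx).
- move=> _ [u Au [c _ <-]] Qz.
  have [c0|c0] := eqVneq c 0; first by move: Qz; rewrite c0 scale0r addr0; exact: AQ0.
  exfalso; apply: xAQ; exists (- c^-1 *: u), (c^-1 *: (u + c *: x)); split.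
  + by apply: subspaceZ.
  + by apply: subspaceZ.
  + by rewrite scalerDr scalerA mulVf // scale1r scaleNr addrA addNr add0r.
Qed.

Lemma exists_complement S Q A0 : subspace S -> subspace Q -> subspace A0 -> A0 `<=` S ->
  (forall x, A0 x -> Q x -> x = 0) ->
  exists2 A, [/\ subspace A, A0 `<=` A, A `<=` S & forall x, A x -> Q x -> x = 0]
    & forall x, S x -> exists u k, [/\ A u, Q k & x = u + k].
Proof.
move=> hS hQ hA0 A0S A0Q.
(* [set0] is admissible so that the union of the empty chain is. *)
pose admissible X := [/\ X `<=` S, (forall x, X x -> Q x -> x = 0) &
  (X = set0 \/ subspace X /\ A0 `<=` X)].
have admissible_inhabited X x : admissible X -> X x -> subspace X /\ A0 `<=` X.
  by case=> _ _ [X0|//]; rewrite X0 in x *.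
have [A [[AS AQ0 A0A] Amax]] : exists A, admissible A /\ forall B, A `<` B -> ~ admissible B.
  apply: Zorn_bigcup => F Fadm Ftot; split.
  - by move=> x [X FX Xx]; case: (Fadm X FX) => + _ _; apply.
  - by move=> x [X FX Xx]; case: (Fadm X FX) => _ + _; apply.
  have [[X [FX [x Xx]]]|Fempty] := pselect (exists X, F X /\ X !=set0); last first.
    left; apply/seteqP; split=> // x [X FX Xx].
    by apply: Fempty; exists X; split=> //; exists x.
  have [[X0 _] A0X] := admissible_inhabited X x (Fadm X FX) Xx.
  right; split; last by move=> z /A0X; exists X.
  split; first by exists X.
  move=> a y z [Y FY Yy] [Z FZ Zz].
  have [YZ|ZY] := Ftot Y Z FY FZ.
    exists Z => //; case: (admissible_inhabited Z z (Fadm Z FZ) Zz) => [[_ hZ] _].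
    by apply: hZ => //; apply: YZ.
  exists Y => //; case: (admissible_inhabited Y y (Fadm Y FY) Yy) => [[_ hY] _].
  by apply: hY => //; apply: ZY.
have [hA A0A'] : subspace A /\ A0 `<=` A.
  case: A0A => [A0'|//]; exfalso; apply: (Amax A0).
    by rewrite A0' /proper; split=> // /(_ 0 hA0.1).
  by split=> //; right; split.
exists A; first by split.
move=> x Sx; apply: contrapT => xAQ.
have [hB AB BS BQ0] := subspace_extend hS hQ hA AS AQ0 Sx xAQ.
apply: (Amax _ AB); split=> //; right; split=> //.
by move=> z /A0A' Az; apply: (properW AB).
Qed.

End Subspaces.

Section LinearOn.
Variables (R : fieldType) (U W : lmodType R).
Implicit Types (S : set U) (f : U -> W).

Definition linear_on S f := forall a x y, S x -> S y -> f (a *: x + y) = a *: f x + f y.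

Lemma linear_on0 S f : subspace S -> linear_on S f -> f 0 = 0.
Proof.
move=> [S0 _] hf; have := hf (-1) 0 0 S0 S0.
by rewrite scaler0 addr0 scaleN1r addNr.
Qed.

Lemma linear_onD S f x y : linear_on S f -> S x -> S y -> f (x + y) = f x + f y.
Proof. by move=> hf Sx Sy; have := hf 1 x y Sx Sy; rewrite !scale1r. Qed.

Lemma linear_onB S f x y : linear_on S f -> S x -> S y ->
  f (x - y) = f x - f y.
Proof.
move=> hf Sx Sy; have := hf (-1) y x Sy Sx.
by rewrite !scaleN1r addrC => ->; rewrite addrC.
Qed.

Lemma linear_on_linear S (f : {linear U -> W}) : linear_on S f.
Proof. by move=> a x y _ _; rewrite linearP. Qed.

Lemma subspace_ker (f : {linear U -> W}) : subspace (f @^-1` [set 0]).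
Proof.
split=> [|a x y fx0 fy0]; first exact: linear0.
by rewrite /preimage /= linearP fx0 fy0 scaler0 addr0.
Qed.

End LinearOn.

Section Splitting.
Variables (R : fieldType) (U : lmodType R).
Implicit Types (S Q T : set U).

Lemma subspace0 : subspace [set 0 : U].
Proof. by split=> // a x y -> ->; rewrite scaler0 addr0. Qed.

Lemma exists_retraction S Q T : subspace S -> subspace Q -> subspace T -> Q `<=` S ->
  exists r : U -> U, [/\ linear_on S r, (forall x, S x -> Q (r x)),
    (forall x, Q x -> r x = x) & (forall x, S x -> T x -> T (r x))].
Proof.
(* Project along a complement of Q in S that contains a complement of
   Q `&` T in S `&` T. *)
move=> hS hQ hT QS.
have hST := subspaceI hS hT.
have zeroST : [set 0] `<=` S `&` T by move=> _ ->; exact: hST.1.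
have [A0 [hA0 _ A0ST A0QT] A0span] :=
  exists_complement hST (subspaceI hQ hT) subspace0 zeroST (fun x x0 _ => x0).
have A0Q0 x : A0 x -> Q x -> x = 0 by move=> A0x Qx; apply: A0QT => //; case: (A0ST x A0x).
have [A [hA A0A AS AQ0] Aspan] :=
  exists_complement hS hQ hA0 (fun x A0x => (A0ST x A0x).1) A0Q0.
have /choice[r hr] : forall x, exists k, Q k /\ (S x -> A (x - k)).
  move=> x; have [Sx|nSx] := pselect (S x); last by exists 0; split=> [|/nSx]; first exact: hQ.1.
  by have [u [k [Au Qk ->]]] := Aspan x Sx; exists k; rewrite addrK.
have r_uniq x u k : A u -> Q k -> x = u + k -> r x = k.
  move=> Au Qk ex; have Sx : S x by rewrite ex; apply: subspaceD (AS _ Au) (QS _ Qk).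
  apply: (direct_sum_uniq hA hQ AQ0 ((hr x).2 Sx) Au (hr x).1 Qk).
  by rewrite subrK.
exists r; split.
- move=> a x y Sx Sy; apply: (r_uniq _ (a *: (x - r x) + (y - r y))).
  + by apply: hA.2; apply: (hr _).2.
  + by apply: hQ.2; apply: (hr _).1.
  + by rewrite scalerBr addrACA !subrK.
- by move=> x _; exact: (hr x).1.
- by move=> k Qk; apply: (r_uniq k 0) => //; [exact: hA.1 | rewrite add0r].
- move=> t St Tt; have [u [k [A0u [Qk Tk] ->]]] := A0span t (conj St Tt).
  by rewrite (r_uniq _ u k) //; apply: A0A.
Qed.

Definition iso_on (W : lmodType R) S (A : set W) T (B : set W) (f : U -> W) :=
  [/\ linear_on S f, f @` S = A, (forall x, S x -> f x = 0 -> x = 0),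
      (forall x, S x -> T x <-> B (f x)) & B `<=` A].

Lemma iso_on_id S T : iso_on S S T (S `&` T) id.
Proof.
split=> //; first exact: image_id.
by move=> x Sx; split=> [|[]].
Qed.

Lemma iso_on_setI (W : lmodType R) S (A : set W) T B f :
  iso_on S A T B f -> iso_on (S `&` T) B T B f.
Proof.
case=> hf fS fker fT BA; split=> //.
- by move=> a x y [Sx _] [Sy _]; apply: hf.
- apply/seteqP; split; first by move=> _ [x [Sx Tx] <-]; apply/fT.
  move=> b Bb; have [x Sx fx] : (f @` S) b by rewrite fS; apply: BA.
  by exists x => //; split=> //; apply/fT => //; rewrite fx.
- by move=> x [Sx _]; apply: fker.
- by move=> x [Sx Tx]; split=> // _; apply/fT.
Qed.

Lemma iso_on_kernel_step (W : lmodType R) S Q T (A B : set W) (g : U -> W) :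
  subspace S -> subspace T -> linear_on S g -> g @` S = A -> g @` (S `&` T) = B ->
  Q = S `&` g @^-1` [set 0] ->
  exists r, iso_on S (A `*` Q) T (B `*` (Q `&` T)) (fun x => (g x, r x)).
Proof.
move=> hS hT hg gS gST Qdef.
have QS : Q `<=` S by rewrite Qdef => x [].
have gQ x : Q x -> g x = 0 by rewrite Qdef => -[].
have Q_ker x : S x -> g x = 0 -> Q x by rewrite Qdef.
have hQ : subspace Q.
  split; first by apply: Q_ker hS.1 (linear_on0 hS hg).
  move=> a x y Qx Qy; apply: Q_ker; first by apply: hS.2; apply: QS.
  by rewrite hg ?gQ ?scaler0 ?addr0 //; apply: QS.
have [r [hr rQ rid rT]] := exists_retraction hS hQ hT QS.
have SrQ x : S x -> S (r x) by move=> Sx; apply/QS/rQ.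
exists r; split.
- by move=> a x y Sx Sy; rewrite hg // hr.
- apply/seteqP; split; first by move=> _ [x Sx <-]; split; [rewrite -gS; exists x | apply: rQ].
  move=> [a q] [/=]; rewrite -gS => -[y Sy <-] Qq.
  have Qry : Q (r y) := rQ y Sy.
  have Sy' : S (y - r y) by apply: subspaceB => //; exact: QS.
  have e1 : g (y - r y) = g y by rewrite (linear_onB hg Sy (QS _ Qry)) (gQ _ Qry) subr0.
  have e2 : r (y - r y) = 0 by rewrite (linear_onB hr Sy (QS _ Qry)) (rid _ Qry) subrr.
  exists (y - r y + q); first exact: subspaceD Sy' (QS _ Qq).
  rewrite (linear_onD hg Sy' (QS _ Qq)) (linear_onD hr Sy' (QS _ Qq)) e1 e2.
  by rewrite (gQ _ Qq) (rid _ Qq) addr0 add0r.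
- move=> x Sx [gx rx]; rewrite -(rid x) //; exact: Q_ker.
- move=> x Sx; split.
    by move=> Tx; split; [rewrite -gST; exists x | split; [apply: rQ | apply: rT]].
  case=> /=; rewrite -gST => -[t [St Tt] gt] [_ Trx].
  have Qxt : Q (x - t) by apply: Q_ker; [apply: subspaceB | rewrite (linear_onB hg) // gt subrr].
  have Txt : T (x - t).
    by rewrite -(rid _ Qxt) (linear_onB hr) //; apply: subspaceB => //; apply: rT.
  by rewrite -(subrK t x); apply: subspaceD.
- move=> [b q] [/=]; rewrite -gST -gS => -[t [St _] <-] [Qq _].
  by split=> //; exists t.
Qed.

Lemma iso_on_pair (W1 W2 : lmodType R) S Q T (A B : set W1) (C D : set W2)
    (f : U -> W1 * U) (h : U -> W2) :
  (Q `&` T) 0 -> iso_on S (A `*` Q) T (B `*` (Q `&` T)) f -> iso_on Q C T D h ->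
  iso_on S (A `*` C) T (B `*` D) (fun x => ((f x).1, h (f x).2)).
Proof.
move=> QT0 [hf fS fker fT BA] [hh hQ hker hT DC].
have fSAQ x : S x -> (A `*` Q) (f x) by move=> Sx; rewrite -fS; exists x.
have fSQ x : S x -> Q (f x).2 by case/fSAQ.
split.
- by move=> a x y Sx Sy /=; rewrite hf // hh //; apply: fSQ.
- apply/seteqP; split.
    move=> _ [x Sx <-]; have [Ax Qx] := fSAQ x Sx.
    by split=> //=; rewrite -hQ; exists (f x).2.
  move=> [a c] [/= Aa]; rewrite -hQ => -[q Qq <-].
  have [x Sx fx] : (f @` S) (a, q) by rewrite fS.
  by exists x => //; rewrite fx.
- move=> x Sx [/= f1 h2]; apply: fker => //.
  have f2 : (f x).2 = 0 by apply: hker => //; apply: fSQ.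
  by rewrite [f x]surjective_pairing f1 f2.
- move=> x Sx; rewrite fT //; have Qx := fSQ x Sx.
  by split=> -[Bx]; [case=> _ /(hT _ Qx) | move/(hT _ Qx)].
- move=> [b d] [/= Bb /DC Cd]; split=> //.
  by have [] := BA (b, 0) (conj Bb QT0).
Qed.

Lemma iso_on_extend (W1 W2 : lmodType R) S Q T (A B : set W1) (C D : set W2)
    (g : U -> W1) :
  subspace S -> subspace T -> linear_on S g -> g @` S = A -> g @` (S `&` T) = B ->
  Q = S `&` g @^-1` [set 0] -> (exists h, iso_on Q C T D h) ->
  exists f, iso_on S (A `*` C) T (B `*` D) f.
Proof.
move=> hS hT hg gS gST Qdef [h hiso].
have [r riso] := iso_on_kernel_step hS hT hg gS gST Qdef.
exists (fun x => (g x, h (r x))); apply: iso_on_pair riso hiso.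
by rewrite Qdef; split; [split; [exact: hS.1 | exact: linear_on0 hS hg] | exact: hT.1].
Qed.

End Splitting.

Section CochainSpace.
Variables (R : fieldType) (K : bicx R).
Implicit Types x y : cochain K.

Lemma cochain_ext x y : (forall p q, x p q = y p q) -> x = y.
Proof. by move=> e; do 2 apply: functional_extensionality_dep => ?; apply: e. Qed.

HB.instance Definition _ := gen_eqMixin (cochain K).
HB.instance Definition _ := gen_choiceMixin (cochain K).

Lemma caddA : associative (cadd K).
Proof. by move=> x y z; apply: cochain_ext => p q; rewrite /cadd addrA. Qed.
Lemma caddC : commutative (cadd K).
Proof. by move=> x y; apply: cochain_ext => p q; rewrite /cadd addrC. Qed.
Lemma cadd0 : left_id (czero K) (cadd K).
Proof. by move=> x; apply: cochain_ext => p q; rewrite /cadd add0r. Qed.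
Lemma caddN : left_inverse (czero K) (copp K) (cadd K).
Proof. by move=> x; apply: cochain_ext => p q; rewrite /cadd addNr. Qed.
HB.instance Definition _ := GRing.isZmodule.Build (cochain K) caddA caddC cadd0 caddN.

Lemma cscaleA a b x : cscale K a (cscale K b x) = cscale K (a * b) x.
Proof. by apply: cochain_ext => p q; rewrite /cscale scalerA. Qed.
Lemma cscale1 : left_id 1 (cscale K).
Proof. by move=> x; apply: cochain_ext => p q; rewrite /cscale scale1r. Qed.
Lemma cscaleDr : right_distributive (cscale K) (cadd K).
Proof. by move=> a x y; apply: cochain_ext => p q; rewrite /cscale /cadd scalerDr. Qed.
Lemma cscaleDl x : {morph cscale K ^~ x : a b / a + b >-> cadd K a b}.
Proof. by move=> a b; apply: cochain_ext => p q; rewrite /cscale /cadd scalerDl. Qed.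
HB.instance Definition _ :=
  GRing.Zmodule_isLmodule.Build R (cochain K) cscaleA cscale1 cscaleDr cscaleDl.

Lemma cochainD x y p q : (x + y) p q = x p q + y p q. Proof. by []. Qed.
Lemma cochainZ a x p q : (a *: x) p q = a *: x p q. Proof. by []. Qed.
Lemma cochain0 p q : (0 : cochain K) p q = 0. Proof. by []. Qed.
Lemma cadd_copp x : cadd K x (copp K x) = 0. Proof. exact: subrr. Qed.

Local Notation proj := (Defs.proj K).
Local Notation comp := (Defs.comp K).

Lemma proj_is_linear q : linear (proj q).
Proof.
move=> a x y; apply: cochain_ext => p j; rewrite /Defs.proj !cochainD !cochainZ.
by case: ifP; rewrite ?scaler0 ?addr0.
Qed.
HB.instance Definition _ q := GRing.isLinear.Build R _ _ _ (proj q) (proj_is_linear q).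

Lemma comp_is_linear i j : linear (comp i j).
Proof.
move=> a x y; apply: cochain_ext => p q; rewrite /Defs.comp !cochainD !cochainZ.
by case: ifP; rewrite ?scaler0 ?addr0.
Qed.
HB.instance Definition _ i j := GRing.isLinear.Build R _ _ _ (comp i j) (comp_is_linear i j).

Lemma D21_is_linear : linear (D21 K).
Proof.
move=> a x y; apply: cochain_ext => -[|[|p]] q;
  by rewrite cochainD cochainZ /= ?linearP ?scaler0 ?addr0.
Qed.
HB.instance Definition _ := GRing.isLinear.Build R _ _ _ (D21 K) D21_is_linear.

Lemma D10_is_linear : linear (D10 K).
Proof.
move=> a x y; apply: cochain_ext => -[|p] q;
  by rewrite cochainD cochainZ /= ?linearP ?scaler0 ?addr0.
Qed.
HB.instance Definition _ := GRing.isLinear.Build R _ _ _ (D10 K) D10_is_linear.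

Lemma D01_is_linear : linear (D01 K).
Proof.
move=> a x y; apply: cochain_ext => p [|q];
  by rewrite cochainD cochainZ /= ?linearP ?scaler0 ?addr0.
Qed.
HB.instance Definition _ := GRing.isLinear.Build R _ _ _ (D01 K) D01_is_linear.

Lemma dtotE x : dtot K x = D21 K x + (D10 K x + D01 K x). Proof. by []. Qed.

Lemma dtot_is_linear : linear (dtot K).
Proof.
move=> a x y; rewrite !dtotE !linearP !scalerDr.
by rewrite [RHS](addrACA (a *: _ x)) [in RHS](addrACA (a *: D10 K x)).
Qed.
HB.instance Definition _ := GRing.isLinear.Build R _ _ _ (dtot K) dtot_is_linear.

End CochainSpace.

Section Components.
Variables (R : fieldType) (K : bicx R).
Implicit Types x y : cochain K.
Local Notation proj := (Defs.proj K).
Local Notation comp := (Defs.comp K).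
Local Notation deg := (deg K).
Local Notation bideg := (bideg K).
Local Notation ker_proj q := (proj q @^-1` [set 0]).

Lemma proj0 x : proj 0 x = x.
Proof. by apply: cochain_ext => p q. Qed.

Lemma proj_proj q q' x : (q <= q')%N -> proj q' (proj q x) = proj q' x.
Proof.
move=> le_qq'; apply: cochain_ext => p j; rewrite /Defs.proj.
by case: ifP => // /(leq_trans le_qq') ->.
Qed.

Lemma ker_proj_succ q : ker_proj q `<=` ker_proj q.+1.
Proof. by move=> x xq; rewrite /preimage /= -(proj_proj x (leqnSn q)) xq linear0. Qed.

Lemma proj_bideg_lt i j q x : bideg i j x -> (j < q)%N -> proj q x = 0.
Proof.
move=> hx lt_jq; apply: cochain_ext => p l; rewrite /Defs.proj cochain0.
by case: ifP => // le_ql; apply: hx => -[_ el]; move: le_ql; rewrite el leqNgt lt_jq.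
Qed.

Lemma bideg_comp i j x : bideg i j (comp i j x).
Proof.
move=> p q ne; rewrite /Defs.comp; case: eqP => [ep|//]; case: eqP => [eq|//].
by case: ne; rewrite ep eq.
Qed.

Lemma comp_bideg i j x : bideg i j x -> comp i j x = x.
Proof.
move=> hx; apply: cochain_ext => p q; rewrite /Defs.comp.
by case: eqP => [->|ne]; case: eqP => [->|ne'] //; rewrite hx // => -[].
Qed.

Lemma bideg_deg i j x : bideg i j x -> deg (i + j) x.
Proof. by move=> hx p q ne; apply: hx => -[ep eq]; case: ne; rewrite ep eq. Qed.

Lemma comp_proj i j q x : (q <= j)%N -> comp i j (proj q x) = comp i j x.
Proof.
move=> le_qj; apply: cochain_ext => p l; rewrite /Defs.comp /Defs.proj.
by case: eqP => // _; case: eqP => // ->; rewrite le_qj.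
Qed.

Lemma deg_proj_gt k x : deg k x -> proj k.+1 x = 0.
Proof.
move=> hx; apply: cochain_ext => p q; rewrite /Defs.proj cochain0.
by case: ifP => // lt_kq; apply: hx; lia.
Qed.

Lemma proj_split k q x : deg k x -> proj q x = comp (k - q) q x + proj q.+1 x.
Proof.
move=> hx; apply: cochain_ext => p j; rewrite cochainD /Defs.proj /Defs.comp.
have [_|_|eq_jq] := ltngtP j q; rewrite ?andbF ?addr0 ?add0r //.
by rewrite andbT; case: eqP => // ne; apply: hx; lia.
Qed.

Lemma proj_deg_ker k q x : deg k x -> proj q.+1 x = 0 -> proj q x = comp (k - q) q x.
Proof. by move=> hx h; rewrite (proj_split q hx) h addr0. Qed.

Lemma bideg_ker_proj1 k x : deg k x -> proj 1 x = 0 -> bideg k 0 x.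
Proof. by move=> hx x1; rewrite -(proj0 x) (proj_deg_ker hx x1) subn0; exact: bideg_comp. Qed.

Lemma setI_ker_proj1 k (X : set (cochain K)) : X `<=` deg k ->
  X `&` ker_proj 1 = X `&` bideg k 0.
Proof.
move=> Xk; apply/seteqP; split=> x [Xx hx]; split=> //.
  exact: bideg_ker_proj1 (Xk _ Xx) hx.
exact: proj_bideg_lt hx (ltn0Sn 0).
Qed.

Lemma deg_dtot k x : deg k x -> deg k.+1 (dtot K x).
Proof.
move=> hx p q ne; rewrite dtotE !cochainD.
by case: p ne => [|[|p]]; case: q => [|q] ne /=; rewrite ?hx ?linear0 ?addr0 //; lia.
Qed.

Lemma comp_dtot_top q x : comp 0 q.+1 (dtot K x) = D01 K (comp 0 q x).
Proof.
apply: cochain_ext => p j; rewrite /Defs.comp.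
case: p => [|p]; case: j => [|j] /=; rewrite ?linear0 ?eqSS //.
by case: eqP => _; rewrite ?linear0 // dtotE !cochainD /= !add0r.
Qed.

Lemma comp_dtot_bottom p x :
  comp p.+2 0 (dtot K x) = D21 K (comp p 1 x) + D10 K (comp p.+1 0 x).
Proof.
apply: cochain_ext => i j; rewrite cochainD /Defs.comp.
case: i => [|[|i]]; case: j => [|j] /=; rewrite ?eqSS ?andbF ?andbT ?linear0 ?addr0 //.
by case: eqP => _; rewrite ?linear0 ?addr0 // dtotE !cochainD /= addr0.
Qed.

Lemma D21_ker_proj1 x : proj 1 x = 0 -> D21 K x = 0.
Proof.
move=> h; apply: cochain_ext => -[|[|p]] q //=.
by have := congr1 (fun z => z p q.+1) h; rewrite /Defs.proj ltn0Sn => ->; rewrite linear0.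
Qed.

Lemma D01_cocycle_bideg p q x : bideg p q x -> dtot K x = 0 -> D01 K x = 0.
Proof.
move=> hx dx0; apply: cochain_ext => i [|j] //=.
have [[-> ->]|ne] := pselect ((i, j) = (p, q)); last by rewrite hx ?linear0.
have := congr1 (fun z => z p q.+1) dx0; rewrite dtotE !cochainD /=.
case: p hx => [|[|p]] hx /=; first by rewrite !add0r.
  by rewrite (hx 0%N q.+1) ?linear0 ?add0r // => -[].
by rewrite (hx p q.+2) ?(hx p.+1 q.+1) ?linear0 ?add0r // => -[]; lia.
Qed.

End Components.

Section Summands.
Variables (R : fieldType) (K : bicx R).
Implicit Types x y : cochain K.
Local Notation proj := (Defs.proj K).
Local Notation comp := (Defs.comp K).
Local Notation deg := (deg K).
Local Notation bideg := (bideg K).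
Local Notation ker_proj q := (proj q @^-1` [set 0]).

Lemma subspace_deg k : subspace (deg k).
Proof.
split=> // a x y hx hy p q ne.
by rewrite cochainD cochainZ hx // hy // scaler0 addr0.
Qed.

Lemma subspace_Zc k : subspace (Zc K k).
Proof. exact: subspaceI (subspace_deg k) (subspace_ker (dtot K)). Qed.

Lemma subspace_Bc k : subspace (Bc K k).
Proof.
case: k => [|k]; first exact: subspace0.
split; first by exists 0; split; [exact: (subspace_deg k).1 | exact: linear0].
move=> a _ _ [x [hx <-]] [y [hy <-]]; exists (a *: x + y).
by split; [exact: (subspace_deg k).2 | exact: linearP].
Qed.

Lemma Bc_deg k x : Bc K k x -> deg k x.
Proof. by case: k => [-> //|k] [y [hy <-]]; exact: deg_dtot. Qed.

Lemma BN0 j m : BN K j m 0.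
Proof.
case: m => [|m] //=; case: ifP => // _; exists 0; split; last exact: linear0.
by split; [|split]; rewrite ?linear0.
Qed.

Lemma Zc_Msp k : Zc K k `<=` Msp K k.
Proof. by move=> x [hx dx0]; split=> // i j _; rewrite dx0 linear0; exact: BN0. Qed.

Lemma Msp_dtot_component k j x : Msp K k x -> (j <= k)%N ->
  exists y, [/\ deg k y, proj j.+1 y = 0 & dtot K y = comp (k.+1 - j) j (dtot K x)].
Proof.
move=> [_ hM] le_jk; have := hM (k.+1 - j)%N j (subnK (leqW le_jk)).
rewrite /BN le_jk => -[y [[hy _] <-]]; exists y; split=> //.
- by rewrite -[k in deg k](subnK le_jk); exact: bideg_deg hy.
- exact: proj_bideg_lt hy (ltnSn j).
Qed.

Lemma Msp_exact_below k q x : (q <= k.+1)%N -> Msp K k x -> proj q (dtot K x) = 0 ->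
  exists y, [/\ deg k y, proj q y = 0 & dtot K y = dtot K x].
Proof.
(* Induction on q: y accounts for the components of dtot x of q-degree < q. *)
move=> le_qk hM dxq.
suff [y [hy yq dy]] : exists y,
    [/\ deg k y, proj q y = 0 & dtot K y = dtot K x - proj q (dtot K x)].
  by exists y; rewrite dy dxq subr0.
elim: q le_qk {dxq} => [|q IH] le_qk.
  exists 0; split; [exact: (subspace_deg k).1 | exact: linear0 |].
  by rewrite proj0 subrr linear0.
have [y [hy yq dy]] := IH (ltnW le_qk).
have [z [hz zq dz]] := Msp_dtot_component hM le_qk.
exists (y + z); split; first exact: subspaceD (subspace_deg k) hy hz.
  by rewrite linearD /= zq -(proj_proj y (leqnSn q)) yq linear0 addr0.
rewrite linearD /= dy dz (proj_split q (deg_dtot hM.1)).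
by rewrite opprD addrA addrAC subrK.
Qed.

Lemma Zc_correction k q x y : deg k x -> deg k y -> proj q y = 0 ->
  dtot K y = dtot K x -> Zc K k (x - y) /\ proj q (x - y) = proj q x.
Proof.
move=> hx hy yq dxy; split; last by rewrite linearB /= yq subr0.
by split; [exact: subspaceB (subspace_deg k) hx hy | rewrite linearB /= dxy subrr].
Qed.

Lemma Zq_image k q : (q <= k.+1)%N -> proj q @` Zc K k = Zq K k q.
Proof.
move=> le_qk; apply/seteqP; split.
  move=> _ [x Zx <-]; exists x; split; first exact: Zc_Msp.
  by split=> //; case: Zx => _ ->; exact: linear0.
move=> _ [x [Mx [<- dxq]]].
have [y [hy yq dy]] := Msp_exact_below le_qk Mx dxq.
by have [Zxy <-] := Zc_correction Mx.1 hy yq dy; exists (x - y).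
Qed.

Lemma Bq_image k q : proj q @` Bc K k = Bq K k q.
Proof. by apply/seteqP; split=> [_ [b hb <-]|_ [b [hb <-]]]; exists b. Qed.

Lemma proj_image_ker k q (X : set (cochain K)) : X `<=` deg k ->
  proj q @` (X `&` ker_proj q.+1) = proj q @` X `&` bideg (k - q) q.
Proof.
move=> Xk; apply/seteqP; split.
  move=> _ [x [Xx xq] <-]; split; first by exists x.
  by rewrite (proj_deg_ker (Xk _ Xx) xq); exact: bideg_comp.
move=> _ [[x Xx <-] hq]; exists x => //; split=> //.
by rewrite /preimage /= -(proj_proj x (leqnSn q)) (proj_bideg_lt hq (ltnSn q)).
Qed.

Lemma proj_top_dtot k y : deg k y -> proj k.+1 (dtot K y) = D01 K (comp 0 k y).
Proof.
move=> hy; have dy := deg_dtot hy.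
by rewrite (proj_deg_ker dy (deg_proj_gt dy)) subnn comp_dtot_top.
Qed.

Lemma proj_top_Bc k : proj k.+1 @` Bc K k.+1 = B0 K k.+1.
Proof.
apply/seteqP; split.
  move=> _ [_ [y [hy <-]] <-]; exists (comp 0 k y).
  by split; [exact: bideg_comp | rewrite proj_top_dtot].
move=> _ [y [hy <-]]; exists (dtot K y); first by exists y; split=> //; exact: bideg_deg hy.
by rewrite proj_top_dtot ?comp_bideg //; exact: bideg_deg hy.
Qed.

Lemma Zc_ker_proj1 k : Zc K k `&` ker_proj 1 = ZN K 0 k.
Proof.
rewrite /ZN leq0n subn0; apply/seteqP; split=> [x [[hx dx0] x1]|x [[hb _] dx0]].
  have hb := bideg_ker_proj1 hx x1.
  by split=> //; split=> //; split; [exact: D01_cocycle_bideg hb dx0 | exact: D21_ker_proj1].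
split; first by split=> //; rewrite -[k]addn0; exact: bideg_deg hb.
exact: proj_bideg_lt hb (ltn0Sn 0).
Qed.

Lemma ker_varrho_image k : proj 1 @` (Zc K k.+1 `&` ker_proj 2) = ker_varrho K k.+1.
Proof.
(* The representative of varrho_(k+1) is the C^{k+2,0}-component of dtot x. *)
have bottom x : cadd K (D21 K (comp k 1 (proj 1 x))) (D10 K (comp k.+1 0 x)) =
    comp k.+2 0 (dtot K x) by rewrite comp_proj // comp_dtot_bottom.
apply/seteqP; split.
  move=> _ [x [[hx dx0] x2] <-].
  have hxi : bideg k 1 (proj 1 x).
    by rewrite (proj_deg_ker hx x2) subn1; exact: bideg_comp.
  have dx1 : proj 1 (dtot K x) = 0 by rewrite dx0 linear0.
  split; first by split=> //; exists x.
  by exists x; do 3!split=> //; rewrite bottom dx0 linear0; exact: BN0.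
move=> xi [[_ hxi] [x [hx [xxi [dx1]]]]]; subst xi.
rewrite /BN leq0n subn0 /= bottom => -[y [[hy _] ey]].
have dxy : dtot K y = dtot K x.
  by rewrite ey -[RHS]proj0 (proj_deg_ker (deg_dtot hx) dx1) subn0.
have hy' : deg k.+1 y by rewrite -[k.+1]addn0; exact: bideg_deg hy.
have [Zxy exy] := Zc_correction hx hy' (proj_bideg_lt hy (ltn0Sn 0)) dxy.
exists (x - y) => //; split=> //.
rewrite /preimage /= -(proj_proj (x - y) (leqnSn 1)) exy.
exact: proj_bideg_lt hxi (ltnSn 1).
Qed.

End Summands.

Section Decompositions.
Variables (R : fieldType) (K : bicx R).
Implicit Types (S T : set (cochain K)).

Lemma iso_on_components S T A1 A2 A3 A4 B
    (f : cochain K -> cochain K * (cochain K * (cochain K * cochain K))) :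
  iso_on S (A4 `*` (A3 `*` (A2 `*` A1))) T B f ->
  [/\ lin_on K S (fun x => (f x).2.2.2), lin_on K S (fun x => (f x).2.2.1),
      lin_on K S (fun x => (f x).2.1) & lin_on K S (fun x => (f x).1)] /\
  forall x, S x -> [/\ A1 (f x).2.2.2, A2 (f x).2.2.1, A3 (f x).2.1 & A4 (f x).1].
Proof.
case=> hf fS _ _ _; split; first by split=> a x y Sx Sy; rewrite /= (hf a x y Sx Sy).
have fA x : S x -> (A4 `*` (A3 `*` (A2 `*` A1))) (f x) by rewrite -fS; exists x.
by move=> x /fA [? [? [? ?]]].
Qed.

Lemma iso4_of_iso_on S T A1 A2 A3 A4 B
    (f : cochain K -> cochain K * (cochain K * (cochain K * cochain K))) :
  subspace S -> iso_on S (A4 `*` (A3 `*` (A2 `*` A1))) T B f -> iso4 K S A1 A2 A3 A4.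
Proof.
move=> hS fiso; have [lin into] := iso_on_components fiso; case: fiso => hf fS fker _ _.
exists (fun x => (f x).2.2.2), (fun x => (f x).2.2.1), (fun x => (f x).2.1), (fun x => (f x).1).
do 2!split=> //; split.
  move=> x y Sx Sy e1 e2 e3 e4; apply/eqP; rewrite -subr_eq0; apply/eqP/fker.
    exact: subspaceB.
  rewrite (linear_onB hf Sx Sy).
  by case: (f x) (f y) e1 e2 e3 e4 => [? [? [? ?]]] [? [? [? ?]]] /= -> -> -> ->; rewrite subrr.
move=> a1 a2 a3 a4 ha1 ha2 ha3 ha4.
have [x Sx fx] : (f @` S) (a4, (a3, (a2, a1))) by rewrite fS.
by exists x; rewrite fx.
Qed.

Lemma qiso4_of_iso_on S T A1 A2 A3 A4 B1 B2 B3 B4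
    (f : cochain K -> cochain K * (cochain K * (cochain K * cochain K))) :
  subspace S -> T 0 ->
  iso_on S (A4 `*` (A3 `*` (A2 `*` A1))) T (B4 `*` (B3 `*` (B2 `*` B1))) f ->
  qiso4 K S T A1 B1 A2 B2 A3 B3 A4 B4.
Proof.
move=> hS T0 fiso; have [lin into] := iso_on_components fiso; case: fiso => hf fS _ fT _.
exists (fun x => (f x).2.2.2), (fun x => (f x).2.2.1), (fun x => (f x).2.1), (fun x => (f x).1).
do 2!split=> //; split; first by move=> x Sx /(fT x Sx) [? [? [? ?]]].
split; first by move=> x Sx *; apply/(fT x Sx); do 3!split=> //.
have [B40 [B30 [B20 B10]]] : (B4 `*` (B3 `*` (B2 `*` B1))) 0.
  by rewrite -(linear_on0 hS hf); apply/fT => //; exact: hS.1.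
move=> a1 a2 a3 a4 ha1 ha2 ha3 ha4.
have [x Sx fx] : (f @` S) (a4, (a3, (a2, a1))) by rewrite fS.
by exists x; rewrite fx /= !cadd_copp.
Qed.

End Decompositions.

Section Corollary.
Variables (R : fieldType) (K : bicx R).
Hypothesis dtotK : forall k (x : cochain K), deg K k x -> dtot K (dtot K x) = czero K.
Local Notation proj := (Defs.proj K).
Local Notation ker_proj q := (proj q @^-1` [set 0]).

Lemma Bc_Zc k : Bc K k `<=` Zc K k.
Proof.
case: k => [x ->|k _ [y [hy <-]]]; first exact: (subspace_Zc K 0).1.
by split; [exact: deg_dtot | exact: dtotK hy].
Qed.

Lemma Zc3_iso_on : exists f, iso_on (Zc K 3)
   (Zq K 3 3 `*` ((Zq K 3 2 `&` bideg K 1 2) `*` (ker_varrho K 3 `*` ZN K 0 3)))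
   (Bc K 3)
   (B0 K 3 `*` ((Bq K 3 2 `&` bideg K 1 2) `*` ((Bq K 3 1 `&` bideg K 2 1) `*`
     (Bc K 3 `&` bideg K 3 0)))) f.
Proof.
have ZB : Zc K 3 `&` Bc K 3 = Bc K 3 := setIidr (@Bc_Zc 3).
have filt q : Zc K 3 `&` ker_proj q = Zc K 3 `&` ker_proj q.+1 `&` ker_proj q.
  by rewrite -setIA (setIidr (@ker_proj_succ _ K q)).
have filtB q : Zc K 3 `&` ker_proj q `&` Bc K 3 = Bc K 3 `&` ker_proj q.
  by rewrite setIAC ZB.
have Zdeg : Zc K 3 `<=` deg K 3 by move=> x [].
have Bdeg : Bc K 3 `<=` deg K 3 := @Bc_deg _ K 3.
have hZ q := subspaceI (subspace_Zc K 3) (subspace_ker (proj q)).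
have hB := subspace_Bc K 3.
apply: (iso_on_extend (subspace_Zc K 3) hB (linear_on_linear (proj 3))
  (@Zq_image _ K 3 3 isT)) => //; first by rewrite ZB proj_top_Bc.
apply: (iso_on_extend (hZ 3) hB (linear_on_linear (proj 2)) _ _ (filt 2)).
- by rewrite (proj_image_ker 2 Zdeg) Zq_image.
- by rewrite filtB (proj_image_ker 2 Bdeg) Bq_image.
apply: (iso_on_extend (hZ 2) hB (linear_on_linear (proj 1)) _ _ (filt 1)).
- exact: ker_varrho_image.
- by rewrite filtB (proj_image_ker 1 Bdeg) Bq_image.
rewrite -(Zc_ker_proj1 K 3) -(setI_ker_proj1 Bdeg) -filtB.
by exists id; exact: iso_on_id.
Qed.

End Corollary.

Theorem corollary5p8 (R : fieldType) (K : bicx R)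
  (hdd : forall k (x : cochain K), deg K k x -> dtot K (dtot K x) = czero K) :
  iso4 K (Bc K 3) (capS K (Bc K 3) (bideg K 3 0)) (capS K (Bq K 3 1) (bideg K 2 1))
       (capS K (Bq K 3 2) (bideg K 1 2)) (B0 K 3)
  /\
  iso4 K (Zc K 3) (ZN K 0 3) (ker_varrho K 3) (capS K (Zq K 3 2) (bideg K 1 2)) (Zq K 3 3)
  /\
  qiso4 K (Zc K 3) (Bc K 3)
        (ZN K 0 3) (capS K (Bc K 3) (bideg K 3 0))
        (ker_varrho K 3) (capS K (Bq K 3 1) (bideg K 2 1))
        (capS K (Zq K 3 2) (bideg K 1 2)) (capS K (Bq K 3 2) (bideg K 1 2))
        (Zq K 3 3) (B0 K 3).
Proof.
have [f fiso] := Zc3_iso_on hdd.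
have hZ := subspace_Zc K 3; have hB := subspace_Bc K 3.
split.
  have := iso_on_setI fiso; rewrite (setIidr (@Bc_Zc _ K hdd 3)).
  exact: iso4_of_iso_on hB.
split; first exact: iso4_of_iso_on hZ fiso.
exact: qiso4_of_iso_on hZ hB.1 fiso.
Qed.
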